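(* If $\beta:[r]\to[2n]$ is qubit-injective, then $T_{TCR}(\beta)$ is transitive and closed under reversal. If moreover $\beta':[s]\to[2n]$ ($s>r$) is qubit-injective and agrees with $\beta$ on $[r]$, then $T_{TCR}(\beta)\subseteq T_{TCR}(\beta')$.
   Context: $[N]=\{1,\dots,N\}$. $Q_n(i)=\min(i,2n+1-i)$ for $i\in[2n]$; $\beta:[r]\to[2n]$ is qubit-injective if $Q_n\circ\beta:[r]\to[n]$ is injective. $T_M(\beta)=\{(i,j): i\in\mathrm{Im}(\beta),\ j\in[2n],\ j<i,\ Q_n(j)\notin\{Q_n(\beta(1)),\dots,Q_n(\beta(\beta^{-1}(i)-1))\}\}$; $T_{MR}(\beta)=\{(i,j):(2n+1-j,2n+1-i)\in T_M(\beta)\}$; $T_{TCR}(\beta)=T_M(\beta)\cup T_{MR}(\beta)$. A set $T$ of pairs is transitive if $(i,j),(j,k)\in T\Rightarrow(i,k)\in T$, and closed under reversal if $(i,j)\in T\iff(2n+1-j,2n+1-i)\in T$. *)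

From mathcomp Require Import all_boot.
Set Implicit Arguments. Unset Strict Implicit. Unset Printing Implicit Defensive.

(* [N] = {1,...,N}; a map beta : [r] -> [2n] is a function nat -> nat whose
   values on 1..r lie in 1..2n (values outside [r] are irrelevant). *)

Definition Q (n i : nat) : nat := minn i (n.*2.+1 - i).

Definition maps_into (n r : nat) (beta : nat -> nat) : Prop :=
  forall k, 1 <= k <= r -> 1 <= beta k <= n.*2.

Definition qubit_injective (n r : nat) (beta : nat -> nat) : Prop :=
  forall k l, 1 <= k <= r -> 1 <= l <= r ->
    Q n (beta k) = Q n (beta l) -> k = l.

(* T_M(beta): (i,j) with i in Im(beta), j in [2n], j < i and
   Q_n(j) not in {Q_n(beta 1), ..., Q_n(beta (beta^-1(i) - 1))}.
   Here k plays the role of beta^-1(i) (unique since beta is injective). *)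
Definition T_M (n r : nat) (beta : nat -> nat) (i j : nat) : Prop :=
  exists k, [/\ 1 <= k <= r, beta k = i, 1 <= j <= n.*2, j < i &
    forall m, 1 <= m < k -> Q n j <> Q n (beta m)].

Definition T_MR (n r : nat) (beta : nat -> nat) (i j : nat) : Prop :=
  T_M n r beta (n.*2.+1 - j) (n.*2.+1 - i).

Definition T_TCR (n r : nat) (beta : nat -> nat) (i j : nat) : Prop :=
  T_M n r beta i j \/ T_MR n r beta i j.

Definition transitive_pairs (T : nat -> nat -> Prop) : Prop :=
  forall i j k, T i j -> T j k -> T i k.

Definition closed_under_reversal (n : nat) (T : nat -> nat -> Prop) : Prop :=
  forall i j, 1 <= i <= n.*2 -> 1 <= j <= n.*2 ->
    (T i j <-> T (n.*2.+1 - j) (n.*2.+1 - i)).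

From mathcomp Require Import all_boot.
From mathcomp Require Import zify.

(* Proof idea: if (i,j) and (j,l) lie in T_M, the beta-index of j cannot precede
   that of i (Q j would then be a forbidden value for the pair (i,j)), so l
   avoids every Q-value forbidden for i.  T_MR is the image of T_M under the
   reversal (i,j) |-> (2n+1-j, 2n+1-i), which preserves Q; hence T_TCR is closed
   under reversal and T_MR is transitive.  In a mixed chain T_M then T_MR the
   endpoint pair is governed by whichever of the two beta-indices comes first,
   and qubit-injectivity separates its Q-value from all earlier ones; the chain
   T_MR then T_M is impossible.  Extending beta keeps every witness of T_M. *)

Lemma Q_rev n x : x <= n.*2.+1 -> Q n (n.*2.+1 - x) = Q n x.
Proof. by rewrite /Q; lia. Qed.

Section Transitivity.

Variables (n r : nat) (beta : nat -> nat).

Lemma T_M_trans i j l : T_M n r beta i j -> T_M n r beta j l -> T_M n r beta i l.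
Proof.
move=> [k [kr <- jb ji Qj]] [k' [k'r bk' lb lj Ql]].
exists k; split=> //; first lia.
have le_kk' : k <= k'.
  rewrite leqNgt; apply/negP => lt_k'k.
  by apply: (Qj k'); [lia | rewrite bk'].
by move=> m mk; apply: Ql; lia.
Qed.

Lemma T_MR_trans i j l :
  T_MR n r beta i j -> T_MR n r beta j l -> T_MR n r beta i l.
Proof. by move=> ij jl; apply: T_M_trans jl ij. Qed.

Hypothesis beta_into : maps_into n r beta.
Hypothesis beta_inj : qubit_injective n r beta.

Lemma Q_beta_neq_earlier k m :
  1 <= k <= r -> 1 <= m < k -> Q n (beta k) <> Q n (beta m).
Proof. by move=> kr mk /beta_inj E; have := E kr ltac:(lia); lia. Qed.

Lemma T_M_T_MR_trans i j l :
  T_M n r beta i j -> T_MR n r beta j l -> T_TCR n r beta i l.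
Proof.
move=> [k [kr bk jb ji Qj]] [k' [k'r bk' ib lj Ql]].
have bkb := beta_into _ kr; have bk'b := beta_into _ k'r.
have [le_kk' | lt_k'k] := leqP k k'.
- left; exists k; split=> //; try lia.
  have -> : Q n l = Q n (beta k') by rewrite bk' Q_rev //; lia.
  by move=> m mk; apply: Q_beta_neq_earlier; lia.
- right; exists k'; split=> //; try lia.
  rewrite Q_rev; last lia.
  by move=> m mk; rewrite -bk; apply: Q_beta_neq_earlier; lia.
Qed.

(* The two indices carry Q-values Q j and Q (2n+1-j), which are equal, so they
   coincide; but 2n+1-j = j has no solution by parity. *)
Lemma T_MR_T_M_false i j l :
  T_MR n r beta i j -> T_M n r beta j l -> False.
Proof.
move=> [k [kr bk _ _ _]] [k' [k'r bk' _ _ _]].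
have bkb := beta_into _ kr; have bk'b := beta_into _ k'r.
have E : Q n (beta k') = Q n (beta k) by rewrite bk bk' Q_rev //; lia.
by have kk' := beta_inj _ _ k'r kr E; subst k'; lia.
Qed.

Lemma T_TCR_trans : transitive_pairs (T_TCR n r beta).
Proof.
move=> i j l [ij | ij] [jl | jl].
- by left; apply: T_M_trans ij jl.
- exact: T_M_T_MR_trans ij jl.
- by exfalso; apply: T_MR_T_M_false ij jl.
- by right; apply: T_MR_trans ij jl.
Qed.

End Transitivity.

Lemma T_TCR_rev n r beta : closed_under_reversal n (T_TCR n r beta).
Proof.
move=> i j ib jb; rewrite /T_TCR /T_MR.
have -> : n.*2.+1 - (n.*2.+1 - i) = i by lia.
have -> : n.*2.+1 - (n.*2.+1 - j) = j by lia.
tauto.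
Qed.

Lemma T_M_extend n r s beta beta' i j : r <= s ->
  (forall k, 1 <= k <= r -> beta' k = beta k) ->
  T_M n r beta i j -> T_M n s beta' i j.
Proof.
move=> rs agree [k [kr bk jb ji Qj]].
exists k; split=> //; first lia.
  by rewrite agree.
by move=> m mk; rewrite agree; [apply: Qj | lia].
Qed.

Lemma T_TCR_extend n r s beta beta' i j : r <= s ->
  (forall k, 1 <= k <= r -> beta' k = beta k) ->
  T_TCR n r beta i j -> T_TCR n s beta' i j.
Proof.
by move=> rs agree [ij | ij]; [left | right]; apply: T_M_extend ij.
Qed.

Theorem lemma7 (n r : nat) (beta : nat -> nat) :
  maps_into n r beta -> qubit_injective n r beta ->
  [/\ transitive_pairs (T_TCR n r beta),
      closed_under_reversal n (T_TCR n r beta) &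
      forall (s : nat) (beta' : nat -> nat), r < s ->
        maps_into n s beta' -> qubit_injective n s beta' ->
        (forall k, 1 <= k <= r -> beta' k = beta k) ->
        forall i j, T_TCR n r beta i j -> T_TCR n s beta' i j].
Proof.
move=> beta_into beta_inj; split.
- exact: T_TCR_trans.
- exact: T_TCR_rev.
- move=> s beta' rs _ _ agree i j.
  by apply: T_TCR_extend agree; apply: ltnW.
Qed.
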